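(* Let $p\ge 2$ and $\varphi\in\mathbb{C}^{p-1}\setminus\Omega_1$. Then $\dim H^1(F_\varphi,F_\varphi)=p-1$.
   Context: Let $p\ge 2$ and $\varphi=(\varphi_1,\dots,\varphi_{p-1})\in\mathbb{C}^{p-1}$. $F_\varphi$ denotes the $2p$-dimensional complex Lie algebra with basis $X_1,\dots,X_{2p}$ whose nonzero brackets (up to antisymmetry) are $[X_1,X_2]=X_1$, $[X_2,X_{2k+1}]=\varphi_kX_{2k+1}$, $[X_2,X_{2k+2}]=-(1+\varphi_k)X_{2k+2}$, $[X_{2k+1},X_{2k+2}]=X_1$ for $1\le k\le p-1$. $\Omega_1\subset\mathbb{C}^{p-1}$ is the union of the hyperplanes $\{1+\varphi_i+\varphi_j=0\}$, $\{2+\varphi_i+\varphi_j=0\}$ ($1\le i,j\le p-1$), $\{\varphi_i-\varphi_j=0\}$ ($1\le i\ne j\le p-1$), $\{\varphi_i=0\}$, $\{\varphi_i+1=0\}$, $\{2\varphi_i+1=0\}$ ($1\le i\le p-1$). $H^1(\mathfrak g,\mathfrak g)$ is the first Chevalley–Eilenberg cohomology with adjoint coefficients (derivations modulo inner derivations). *)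

(* Complex numbers: R[i] (mathcomp-real-closed `complex`)
   for an arbitrary R : realType, i.e. the field C. *)
From HB Require Import structures.
From mathcomp Require Import all_boot all_order all_algebra complex.
From mathcomp Require Import reals.
Set Implicit Arguments. Unset Strict Implicit. Unset Printing Implicit Defensive.
Import Order.TTheory GRing.Theory Num.Theory.
Local Open Scope ring_scope.

Section LieCohomology.
Variables (K : fieldType) (n : nat).

(* A finite-dimensional Lie algebra K^n given by structure constants:
   c i j = [e_i, e_j]  (vectors are row vectors). *)
Definition basis_vec (i : 'I_n) : 'rV[K]_n := delta_mx 0 i.

Definition lie_br (c : 'I_n -> 'I_n -> 'rV[K]_n) (u v : 'rV[K]_n) : 'rV[K]_n :=
  \sum_(i < n) \sum_(j < n) (u 0 i * v 0 j) *: c i j.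

(* Linear endomorphisms are n x n matrices acting on the right: x |-> x *m D.
   Defect of D being a derivation, tested on pairs of basis vectors. *)
Definition der_defect (c : 'I_n -> 'I_n -> 'rV[K]_n) (D : 'M[K]_n)
  : {ffun 'I_n * 'I_n -> 'rV[K]_n} :=
  [ffun ij : 'I_n * 'I_n =>
     lie_br c (basis_vec ij.1) (basis_vec ij.2) *m D
     - lie_br c (basis_vec ij.1 *m D) (basis_vec ij.2)
     - lie_br c (basis_vec ij.1) (basis_vec ij.2 *m D)].

Definition Der (c : 'I_n -> 'I_n -> 'rV[K]_n) : {vspace 'M[K]_n} :=
  lker (linfun (der_defect c)).

Definition ad (c : 'I_n -> 'I_n -> 'rV[K]_n) (x : 'rV[K]_n) : 'M[K]_n :=
  \matrix_(j < n) lie_br c x (basis_vec j).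

Definition Inn (c : 'I_n -> 'I_n -> 'rV[K]_n) : {vspace 'M[K]_n} :=
  <<[seq ad c (basis_vec i) | i <- enum 'I_n]>>%VS.

(* dim H^1(g, g) = dim Der(g) / (Der(g) ∩ ad(g))   ( = Der/Inn ). *)
Definition H1_dim (c : 'I_n -> 'I_n -> 'rV[K]_n) : nat :=
  (\dim (Der c) - \dim (Der c :&: Inn c))%N.

End LieCohomology.

Section Fphi.
Variables (K : fieldType) (p : nat) (phi : nat -> K).
(* phi k = varphi_k for 1 <= k <= p-1 (other values irrelevant).
   0-based basis indices: X_m is index m-1; so X_1 ~ 0, X_2 ~ 1,
   X_{2k+1} ~ 2k, X_{2k+2} ~ 2k+1. *)

Definition ev (m : nat) : 'rV[K]_(2 * p) := \row_(l < 2 * p) (if val l == m then 1 else 0).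

(* bracket [X_{i+1}, X_{j+1}] for an ordered pair with i < j *)
Definition Fbr_up (i j : nat) : 'rV[K]_(2 * p) :=
  if (i == 0%N) && (j == 1%N) then ev 0
  else if (i == 1%N) && (2 <= j)%N then
    (if ~~ odd j then phi j./2 *: ev j else - (1 + phi j./2) *: ev j)
  else if (2 <= i)%N && ~~ odd i && (j == i.+1) then ev 0
  else 0.

Definition Fc (i j : 'I_(2 * p)) : 'rV[K]_(2 * p) :=
  if (val i < val j)%N then Fbr_up i j
  else if (val j < val i)%N then - Fbr_up j i
  else 0.

End Fphi.

Definition in_Omega1 (K : fieldType) (p : nat) (phi : nat -> K) : Prop :=
  (exists i j : nat, [/\ (1 <= i <= p.-1)%N, (1 <= j <= p.-1)%N &
      [\/ 1 + phi i + phi j = 0, 2 + phi i + phi j = 0 |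
          (i != j) /\ phi i - phi j = 0]])
  \/ (exists i : nat, (1 <= i <= p.-1)%N /\
      [\/ phi i = 0, phi i + 1 = 0 | 2 * phi i + 1 = 0]).

Arguments Fc {K} p phi i j.
Arguments in_Omega1 {K} p phi.
Arguments H1_dim {K n} c.

From HB Require Import structures.
From mathcomp Require Import all_boot all_order all_algebra complex.
From mathcomp Require Import reals.
From mathcomp Require Import zify ring.
Set Implicit Arguments. Unset Strict Implicit. Unset Printing Implicit Defensive.
Import GRing.Theory.
Local Open Scope ring_scope.

(* X_2 acts diagonally, ad X_2 X_{t+1} = weight t X_{t+1}, and outside Omega_1 the
   2p weights are pairwise distinct.  Comparing weights in
   D[X_2, X_t] = [D X_2, X_t] + [X_2, D X_t] shows that a derivation D, once the
   inner derivation ad w with w read off from D X_1 and D X_2 is subtracted,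
   becomes diagonal, vanishes on X_1 and X_2, and has opposite entries on the two
   vectors of each block {X_{2k+1}, X_{2k+2}}, k = 1 .. p-1.  These diagonal
   matrices are derivations and span a (p-1)-dimensional space.  Every inner
   derivation M satisfies M_tt + weight t * M_11 = 0, which no nonzero element of
   that space does; hence Der = (Der :&: ad) (+) span and dim H^1 = p - 1. *)

Lemma dimv_compl_cap (K : fieldType) (vT : vectType K) (U I E : {vspace vT}) :
  (E <= U)%VS -> (I :&: E = 0)%VS -> (U <= I + E)%VS ->
  (\dim U - \dim (U :&: I))%N = \dim E.
Proof.
move=> sEU dIE sUIE.
have defU : U = (U :&: I + E)%VS.
  apply/eqP; rewrite eqEsubv subv_add capvSl sEU !andbT.
  apply/subvP => u Uu; have /memv_addP[v Iv [e Ee defu]] := subvP sUIE u Uu.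
  rewrite defu memv_add // memv_cap Iv andbT.
  by rewrite -[v](addrK e) -defu memvB // (subvP sEU).
rewrite {1}defU dimv_disjoint_sum ?addKn //.
by apply/eqP; rewrite -subv0 -dIE capvS ?capvSr.
Qed.

Lemma eq0_by_comb (R : pzRingType) (x y z k : R) : y = z -> x = k * (y - z) -> x = 0.
Proof. by move=> -> ->; rewrite subrr mulr0. Qed.

Section StructureConstants.
Variables (K : fieldType) (n : nat) (c : 'I_n -> 'I_n -> 'rV[K]_n).
Local Notation e := (basis_vec K).

Lemma lie_br_linearl a u u' v :
  lie_br c (a *: u + u') v = a *: lie_br c u v + lie_br c u' v.
Proof.
rewrite /lie_br scaler_sumr -big_split; apply: eq_bigr => i _.
rewrite scaler_sumr -big_split; apply: eq_bigr => j _ /=.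
by rewrite !mxE scalerA -scalerDl mulrDl mulrA.
Qed.

Lemma lie_br_linearr a u v v' :
  lie_br c u (a *: v + v') = a *: lie_br c u v + lie_br c u v'.
Proof.
rewrite /lie_br scaler_sumr -big_split; apply: eq_bigr => i _.
rewrite scaler_sumr -big_split; apply: eq_bigr => j _ /=.
by rewrite !mxE scalerA -scalerDl mulrDr mulrCA.
Qed.

Lemma lie_brZl a u v : lie_br c (a *: u) v = a *: lie_br c u v.
Proof.
rewrite /lie_br scaler_sumr; apply: eq_bigr => i _.
by rewrite scaler_sumr; apply: eq_bigr => j _; rewrite !mxE scalerA mulrA.
Qed.

Lemma lie_brZr a u v : lie_br c u (a *: v) = a *: lie_br c u v.
Proof.
rewrite /lie_br scaler_sumr; apply: eq_bigr => i _.
by rewrite scaler_sumr; apply: eq_bigr => j _; rewrite !mxE scalerA mulrCA.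
Qed.

Lemma basis_vecE (i j : 'I_n) : e i 0 j = (i == j)%:R.
Proof. by rewrite mxE eqxx /= eq_sym. Qed.

Lemma scale_basisE a (t m : 'I_n) : (a *: e t) 0 m = a * (m == t)%:R.
Proof. by rewrite mxE basis_vecE eq_sym. Qed.

Lemma lie_br_basisl a v : lie_br c (e a) v = \sum_j v 0 j *: c a j.
Proof.
rewrite /lie_br (bigD1 a) //= [X in _ + X]big1 ?addr0 => [|i ne].
  by apply: eq_bigr => j _; rewrite basis_vecE eqxx mul1r.
by rewrite big1 // => j _; rewrite basis_vecE eq_sym (negbTE ne) mul0r scale0r.
Qed.

Lemma lie_br_basisr u b : lie_br c u (e b) = \sum_i u 0 i *: c i b.
Proof.
rewrite /lie_br; apply: eq_bigr => i _.
rewrite (bigD1 b) //= [X in _ + X]big1 ?addr0 => [|j ne].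
  by rewrite basis_vecE eqxx mulr1.
by rewrite basis_vecE eq_sym (negbTE ne) mulr0 scale0r.
Qed.

Lemma lie_br_basis a b : lie_br c (e a) (e b) = c a b.
Proof.
rewrite lie_br_basisl (bigD1 b) //= [X in _ + X]big1 ?addr0 => [|j ne].
  by rewrite basis_vecE eqxx scale1r.
by rewrite basis_vecE eq_sym (negbTE ne) scale0r.
Qed.

Lemma lie_br_antisym : (forall i j, c j i = - c i j) ->
  forall u v, lie_br c v u = - lie_br c u v.
Proof.
move=> c_anti u v; rewrite /lie_br exchange_big -sumrN; apply: eq_bigr => i _.
by rewrite -sumrN; apply: eq_bigr => j _; rewrite c_anti scalerN mulrC.
Qed.

Lemma der_defect_is_linear : linear (der_defect c).
Proof.
move=> a D D'; apply/ffunP => ij; rewrite !ffunE.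
rewrite mulmxDr -scalemxAr !mulmxDr -!scalemxAr lie_br_linearl lie_br_linearr.
by apply/rowP => m; rewrite !mxE; ring.
Qed.

HB.instance Definition _ :=
  GRing.isLinear.Build K _ _ _ (der_defect c) der_defect_is_linear.

Lemma mem_Der D : (D \in Der c) = (der_defect c D == 0).
Proof. by rewrite memv_ker lfunE. Qed.

Lemma Der_bracket D : D \in Der c -> forall i j,
  c i j *m D = lie_br c (row i D) (e j) + lie_br c (e i) (row j D).
Proof.
rewrite mem_Der => /eqP /ffunP der0 i j; move: (der0 (i, j)).
rewrite !ffunE /= lie_br_basis -!rowE => /eqP.
by rewrite subr_eq0 subr_eq => /eqP ->; rewrite addrC.
Qed.

Lemma diag_mx_Der (d : 'rV[K]_n) :
  (forall i j m, c i j 0 m * d 0 m = (d 0 i + d 0 j) * c i j 0 m) ->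
  diag_mx d \in Der c.
Proof.
move=> dc; rewrite mem_Der; apply/eqP/ffunP => -[i j]; rewrite !ffunE /=.
have diag_basis t : e t *m diag_mx d = d 0 t *: e t.
  apply/rowP => m; rewrite mul_mx_diag !mxE eqxx /=.
  by case: eqP => [->|_]; rewrite ?mul1r ?mulr1 ?mul0r ?mulr0.
rewrite !diag_basis lie_brZl lie_brZr !lie_br_basis.
by apply/rowP => m; rewrite mul_mx_diag !mxE dc; ring.
Qed.

Lemma ad_entry x a m : ad c x a m = lie_br c x (e a) 0 m.
Proof. by rewrite mxE. Qed.

Lemma adE x a m : ad c x a m = (\sum_i x 0 i *: c i a) 0 m.
Proof. by rewrite ad_entry lie_br_basisr. Qed.

Lemma ad_is_linear : linear (ad c).
Proof. by move=> a x y; apply/matrixP => i j; rewrite !mxE lie_br_linearl !mxE. Qed.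

HB.instance Definition _ := GRing.isLinear.Build K _ _ _ (ad c) ad_is_linear.

Lemma ad_Inn x : ad c x \in Inn c.
Proof.
rewrite [x]row_sum_delta linear_sum; apply: memv_suml => b _.
by rewrite linearZ memvZ // memv_span //; apply/mapP; exists b; rewrite ?mem_enum.
Qed.

Lemma Inn_ad M : M \in Inn c -> exists x, M = ad c x.
Proof.
have InnS : (Inn c <= limg (linfun (ad c)))%VS.
  by apply/span_subvP => _ /mapP[b _ ->]; rewrite -lfunE memv_img ?memvf.
by move=> /(subvP InnS)/memv_imgP[x _ ->]; exists x; rewrite lfunE.
Qed.

End StructureConstants.

Section Fphi.
Variables (K : fieldType) (p : nat) (phi : nat -> K).
Local Notation N := (2 * p)%N.
Local Notation c := (Fc p phi).
Local Notation e := (basis_vec K).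

(* weight t is the eigenvalue of ad X_2 on X_{t+1}; on the block {X_{2k+1}, X_{2k+2}}
   the two eigenvalues are block_weight k and -1 - block_weight k. *)
Definition block_weight (k : nat) : K := if k == 0%N then -1 else phi k.

Definition weight (t : nat) : K :=
  if odd t then -1 - block_weight t./2 else block_weight t./2.

Definition partner (t : nat) : nat := if odd t then t.-1 else t.+1.

Definition pair_sign (t : nat) : K := if odd t then -1 else 1.

Lemma partner_odd t : odd (partner t) = ~~ odd t.
Proof. by rewrite /partner; case: ifP; lia. Qed.

Lemma partner_half t : (partner t)./2 = t./2.
Proof. by rewrite /partner; case: ifP; lia. Qed.

Lemma partnerK : involutive partner.
Proof.
by move=> t; rewrite /partner; case ot: (odd t) => /=; [rewrite ifF|rewrite ifT]; lia.
Qed.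

Lemma weight_partner t : weight (partner t) = -1 - weight t.
Proof. by rewrite /weight partner_odd partner_half; case: odd => /=; ring. Qed.

Hypothesis p_gt0 : (0 < p)%N.

Fact iX1_subproof : (0 < N)%N. Proof. by rewrite muln_gt0. Qed.
Fact iX2_subproof : (1 < N)%N. Proof. lia. Qed.
Definition iX1 : 'I_N := Ordinal iX1_subproof.
Definition iX2 : 'I_N := Ordinal iX2_subproof.

Lemma eq_X1 a : (a == iX1) = (nat_of_ord a == 0%N). Proof. by rewrite -val_eqE. Qed.
Lemma eq_X2 a : (a == iX2) = (nat_of_ord a == 1%N). Proof. by rewrite -val_eqE. Qed.

Lemma ord_lt2 (a : 'I_N) : (a < 2)%N -> a = iX1 \/ a = iX2.
Proof. by case: a => [[|[|]] ?] // _; [left | right]; apply: ord_inj. Qed.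

Definition pord (a : 'I_N) : 'I_N := insubd iX1 (partner a).

Lemma pordE a : nat_of_ord (pord a) = partner a.
Proof.
rewrite val_insubd ifT //.
by have := ltn_ord a; rewrite /partner; case: ifP; lia.
Qed.

Lemma pordK : involutive pord.
Proof. by move=> a; apply: ord_inj; rewrite !pordE partnerK. Qed.

Lemma weight_X1 : weight iX1 = -1. Proof. by []. Qed.
Lemma weight_X2 : weight iX2 = 0. Proof. by rewrite /weight /= subrr. Qed.

Lemma ev_ord (t : 'I_N) : ev K p t = e t.
Proof. by apply/rowP => m; rewrite basis_vecE mxE -val_eqE eq_sym; case: eqP. Qed.

Lemma Fc_antisym i j : c j i = - c i j.
Proof. by rewrite /Fc; case: ltngtP; rewrite ?opprK ?oppr0. Qed.

Lemma Fc_X2l j : c iX2 j = weight j *: e j.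
Proof.
rewrite /Fc /Fbr_up /weight /block_weight -ev_ord.
case: j => [[|[|j]] ?] /=; rewrite ?scaleN1r ?subrr ?scale0r //.
by case: odd; rewrite /= ?opprD.
Qed.

Lemma Fc_X2r i : c i iX2 = - weight i *: e i.
Proof. by rewrite Fc_antisym Fc_X2l scaleNr. Qed.

Lemma Fc_offX2 i j : i != iX2 -> j != iX2 ->
  c i j = if (2 <= i)%N && (val j == partner i) then pair_sign i *: e iX1 else 0.
Proof.
rewrite !eq_X2 -ev_ord /Fc /Fbr_up /partner /pair_sign.
case: i => [[|[|i]] ?] //=; case: j => [[|[|j]] ?] //= _ _.
- by case: odd; rewrite oppr0.
rewrite !negbK; case oi: (odd i) => /=; repeat case: ifP => ?; try (exfalso; lia);
  by rewrite ?scale1r ?scaleN1r ?oppr0.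
Qed.

End Fphi.

Section WeightInjective.
Variables (K : fieldType) (p : nat) (phi : nat -> K).
Local Notation N := (2 * p)%N.
Local Notation block_weight := (block_weight phi).
Local Notation weight := (weight phi).

Lemma notOmega1_block_weight_inj : ~ in_Omega1 p phi ->
  forall k l, (k < p)%N -> (l < p)%N -> block_weight k = block_weight l -> k = l.
Proof.
move=> notO k l kp lp; rewrite /block_weight.
case: eqP => [->|/eqP k0]; case: eqP => [->|/eqP l0] // E.
- by case: notO; right; exists l; split; [lia | apply: Or32; rewrite -E addNr].
- by case: notO; right; exists k; split; [lia | apply: Or32; rewrite E addNr].
- apply/eqP; apply: contraT => kl; case: notO; left; exists k, l.
  by split; [lia | lia | apply: Or33; rewrite E subrr].
Qed.

Lemma notOmega1_block_weight_sum : ~ in_Omega1 p phi ->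
  forall k l, (k < p)%N -> (l < p)%N -> block_weight k + block_weight l != -1.
Proof.
move=> notO k l kp lp; apply/eqP; rewrite /block_weight.
case: eqP => [_|/eqP k0]; case: eqP => [_|/eqP l0] E.
- by move/eqP: (oner_neq0 K); apply; apply: (eq0_by_comb (k := -1) E); ring.
- case: notO; right; exists l; split; first lia.
  by apply: Or31; apply: (eq0_by_comb (k := 1) E); ring.
- case: notO; right; exists k; split; first lia.
  by apply: Or31; apply: (eq0_by_comb (k := 1) E); ring.
- case: notO; left; exists k, l; split; [lia | lia |].
  by apply: Or31; apply: (eq0_by_comb (k := 1) E); ring.
Qed.

Lemma weight_inj :
  (forall k l, (k < p)%N -> (l < p)%N -> block_weight k = block_weight l -> k = l) ->
  (forall k l, (k < p)%N -> (l < p)%N -> block_weight k + block_weight l != -1) ->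
  injective (fun a : 'I_N => weight a).
Proof.
move=> bw_inj bw_sum a m; rewrite /weight => E; apply: ord_inj.
have [ap mp] : (a./2 < p)%N /\ (m./2 < p)%N by have := ltn_ord a; have := ltn_ord m; lia.
case oa: (odd a); case om: (odd m); rewrite oa om in E.
- by move/addrI/oppr_inj/(bw_inj _ _ ap mp): E; lia.
- by case/eqP: (bw_sum _ _ ap mp); rewrite -E; ring.
- by case/eqP: (bw_sum _ _ ap mp); rewrite E; ring.
- by move/(bw_inj _ _ ap mp): E; lia.
Qed.

End WeightInjective.

Section Derivations.
Variables (K : fieldType) (p : nat) (phi : nat -> K).
Local Notation N := (2 * p)%N.
Local Notation c := (Fc p phi).
Local Notation e := (basis_vec K).
Local Notation weight := (weight phi).
Local Notation pair_sign := (pair_sign K).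
Hypothesis p_gt0 : (0 < p)%N.
Local Notation iX1 := (iX1 p_gt0).
Local Notation iX2 := (iX2 p_gt0).
Local Notation pord := (pord p_gt0).
Local Notation ord_lt2 := (ord_lt2 p_gt0).

Lemma lie_br_X2 y m : lie_br c (e iX2) y 0 m = y 0 m * weight m.
Proof.
rewrite lie_br_basisl summxE (bigD1 m) //= big1 ?addr0 => [|i ne].
  by rewrite Fc_X2l scalerA scale_basisE eqxx mulr1.
by rewrite Fc_X2l scalerA scale_basisE eq_sym (negbTE ne) mulr0.
Qed.

Lemma ad_X1 x m : ad c x iX1 m = - x 0 iX2 * (m == iX1)%:R.
Proof.
rewrite adE summxE (bigD1 iX2) //= big1 ?addr0 => [|i ne].
  by rewrite Fc_X2l scalerA scale_basisE weight_X1 mulrN1.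
rewrite Fc_offX2 //.
by case: ifP => [/andP[i2]|_]; [rewrite /= /partner; case: ifP; lia | rewrite scaler0 mxE].
Qed.

Lemma ad_X2 x m : ad c x iX2 m = - x 0 m * weight m.
Proof.
rewrite adE summxE (bigD1 m) //= big1 ?addr0 => [|i ne].
  by rewrite Fc_X2r scalerA scale_basisE eqxx mulr1 mulrN mulNr.
by rewrite Fc_X2r scalerA scale_basisE eq_sym (negbTE ne) mulr0.
Qed.

Lemma ad_high x (a m : 'I_N) : (2 <= a)%N ->
  ad c x a m = x 0 iX2 * weight a * (m == a)%:R
             + x 0 (pord a) * pair_sign (pord a) * (m == iX1)%:R.
Proof.
move=> a2; have b2 : (2 <= pord a)%N by rewrite pordE /partner; case: ifP; lia.
have [aX2 bX2] : a != iX2 /\ pord a != iX2 by rewrite !eq_X2; lia.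
rewrite adE summxE (bigD1 iX2) //= (bigD1 (pord a)) //=.
rewrite big1 ?addr0 => [|i /andP[i2 ib]].
  have ab : nat_of_ord a == partner (pord a) by rewrite pordE partnerK.
  by rewrite Fc_X2l Fc_offX2 // b2 ab !scalerA !scale_basisE.
rewrite Fc_offX2 //; case: ifP => [|_]; last by rewrite scaler0 mxE.
move=> /andP[_ /eqP ai]; case/negP: ib.
by apply/eqP/ord_inj; rewrite pordE ai partnerK.
Qed.

Lemma ad_diag x a : ad c x a a = x 0 iX2 * weight a.
Proof.
case: (ltnP a 2) => [a2|a2]; last first.
  have aX1 : (a == iX1) = false by rewrite eq_X1; lia.
  by rewrite ad_high // eqxx aX1 mulr1 mulr0 addr0.
have [->|->] := ord_lt2 a2.
- by rewrite ad_X1 eqxx weight_X1 mulr1 mulrN1.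
- by rewrite ad_X2 weight_X2 !mulr0.
Qed.

Lemma Inn_diag M a : M \in Inn c -> M a a + weight a * M iX1 iX1 = 0.
Proof. by case/Inn_ad => x ->; rewrite !ad_diag weight_X1; ring. Qed.

Hypothesis weightI : injective (fun a : 'I_N => weight a).

Lemma weight_sep (a m : 'I_N) x : a != m -> (weight a - weight m) * x = 0 -> x = 0.
Proof.
move=> am /eqP; rewrite mulf_eq0 subr_eq0 => /orP[/eqP E|/eqP //].
by rewrite (weightI E) eqxx in am.
Qed.

Lemma weight_neq0 (a : 'I_N) : a != iX2 -> weight a != 0.
Proof.
by apply: contra => /eqP; rewrite -(@weight_X2 _ _ phi p_gt0) => E; rewrite (weightI E).
Qed.

Section DerivationEntries.
Variable D : 'M[K]_N.
Hypothesis DerD : D \in Der c.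

Lemma der_weight (a m : 'I_N) : weight a * D a m = ad c (row iX2 D) a m + D a m * weight m.
Proof.
have /rowP/(_ m) := Der_bracket DerD iX2 a.
by rewrite Fc_X2l -scalemxAl -rowE !mxE lie_br_X2 mxE -ad_entry.
Qed.

Lemma der_X2X2 : D iX2 iX2 = 0.
Proof.
have := der_weight iX1 iX1; rewrite ad_X1 weight_X1 eqxx mulr1 mxE => E.
by apply: (eq0_by_comb (k := 1) E); ring.
Qed.

Lemma der_X1 (m : 'I_N) : m != iX1 -> D iX1 m = 0.
Proof.
move=> mX1; apply: (weight_sep mX1).
have := der_weight iX1 m; rewrite ad_X1 (negbTE mX1) mulr0 => E.
by rewrite mulrBl E; ring.
Qed.

Lemma der_high_offdiag (a m : 'I_N) : (2 <= a)%N -> m != iX1 -> m != a -> D a m = 0.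
Proof.
move=> a2 mX1 ma; apply: (weight_sep ma).
have := der_weight a m; rewrite ad_high // (negbTE ma) (negbTE mX1) !mulr0 => E.
by rewrite mulrBl E; ring.
Qed.

Lemma der_high_X1 (a : 'I_N) : (2 <= a)%N ->
  (weight a + 1) * D a iX1 = D iX2 (pord a) * pair_sign (pord a).
Proof.
move=> a2; have aX1 : (iX1 == a) = false by rewrite eq_sym eq_X1; lia.
have := der_weight a iX1; rewrite ad_high // eqxx aX1 mulr0 mulr1 weight_X1 !mxE => E.
by rewrite mulrDl E; ring.
Qed.

Lemma der_pair_diag (a : 'I_N) : (2 <= a)%N -> ~~ odd a ->
  D iX1 iX1 = D a a + D (pord a) (pord a).
Proof.
move=> a2 ea; set b := pord a.
have b2 : (2 <= b)%N by rewrite pordE /partner (negbTE ea); lia.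
have ba : pord b = a by apply: ord_inj; rewrite !pordE partnerK.
have [aX2 bX2] : a != iX2 /\ b != iX2 by rewrite !eq_X2; lia.
have [aX1 bX1] : (iX1 == a) = false /\ (iX1 == b) = false.
  by rewrite ![iX1 == _]eq_sym !eq_X1; lia.
have sa : pair_sign a = 1 by rewrite /pair_sign (negbTE ea).
have sb : pair_sign b = -1 by rewrite /pair_sign pordE partner_odd ea.
have ab : (2 <= a)%N && (nat_of_ord b == partner a) by rewrite a2 pordE eqxx.
have /rowP/(_ iX1) := Der_bracket DerD a b.
rewrite Fc_offX2 // ab sa scale1r -rowE !mxE.
rewrite (lie_br_antisym (@Fc_antisym _ _ _) (row b D) (e a)) mxE.
rewrite -!ad_entry !ad_high // ba sa sb aX1 bX1 eqxx !mulr0 !mulr1 !mxE => ->; ring.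
Qed.

End DerivationEntries.

Definition inner_part (D : 'M[K]_N) : 'rV[K]_N :=
  \row_m (if m == iX2 then - D iX1 iX1 else - D iX2 m / weight m).

Lemma der_offdiag_ad D (a m : 'I_N) : D \in Der c -> a != m ->
  D a m = ad c (inner_part D) a m.
Proof.
move=> DerD; set w := inner_part D.
have wE t : w 0 t = if t == iX2 then - D iX1 iX1 else - D iX2 t / weight t by rewrite mxE.
case: (leqP 2 a) => [a2|/ord_lt2[]->]; rewrite eq_sym => am.
- rewrite ad_high // (negbTE am) mulr0 add0r; case: (eqVneq m iX1) => [->|mX1].
    have bX2 : pord a != iX2 by rewrite eq_X2 pordE /partner; case: ifP; lia.
    have wb : - weight (pord a) != 0 by rewrite oppr_eq0 weight_neq0.
    have := der_high_X1 DerD a2.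
    rewrite (_ : weight a + 1 = - weight (pord a)); last by rewrite pordE weight_partner; ring.
    by move=> E; rewrite -[D a iX1](mulKf wb) E mulr1 wE (negbTE bX2) invrN; ring.
  by rewrite mulr0 (der_high_offdiag DerD).
- by rewrite (der_X1 DerD) // ad_X1 (negbTE am) mulr0.
- by rewrite ad_X2 wE (negbTE am) mulNr divfK ?opprK ?weight_neq0.
Qed.

Lemma der_decomp D : D \in Der c ->
  D = ad c (inner_part D) + diag_mx (\row_a (D a a + D iX1 iX1 * weight a)).
Proof.
move=> DerD; apply/matrixP => a m; rewrite !mxE -[lie_br _ _ _ _ _]ad_entry.
case: (eqVneq a m) => [<-|am]; last by rewrite mulr0n addr0 der_offdiag_ad.
by rewrite mulr1n ad_diag mxE eqxx; ring.
Qed.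

Definition pair_coef (k t : nat) : K := (t == (2 * k)%N)%:R - (t == (2 * k).+1)%:R.

Definition pair_diag (k : nat) : 'M[K]_N := diag_mx (\row_(t < N) pair_coef k t).

Lemma pair_coef_lt2 k t : (0 < k)%N -> (t < 2)%N -> pair_coef k t = 0.
Proof.
move=> k0 t2; rewrite /pair_coef.
have [-> ->] : (t == (2 * k)%N) = false /\ (t == (2 * k).+1) = false by split; lia.
exact: subrr.
Qed.

Lemma pair_coef_partner k t : (2 <= t)%N -> pair_coef k t + pair_coef k (partner t) = 0.
Proof.
move=> t2; rewrite /pair_coef /partner; case ot: (odd t) => /=;
case: (t =P 2 * k) => e1; case: (t =P (2 * k).+1) => e2;
case: (_ =P 2 * k) => e3; case: (_ =P (2 * k).+1) => e4; try lia; rewrite /=; ring.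
Qed.

Lemma pair_diag_Der k : (0 < k)%N -> pair_diag k \in Der c.
Proof.
move=> k0; apply: diag_mx_Der => i j m; rewrite !mxE.
have [d1 d2] : pair_coef k iX1 = 0 /\ pair_coef k iX2 = 0 by rewrite !pair_coef_lt2.
case: (eqVneq i iX2) => [->|iX2'].
  by rewrite Fc_X2l scale_basisE d2 add0r; case: eqP => [->|_]; rewrite ?mulr1 ?mulr0; ring.
case: (eqVneq j iX2) => [->|jX2'].
  by rewrite Fc_X2r scale_basisE d2 addr0; case: eqP => [->|_]; rewrite ?mulr1 ?mulr0; ring.
rewrite Fc_offX2 //; case: ifP => [/andP[i2 /eqP ji]|_]; last by rewrite mxE mul0r mulr0.
rewrite scale_basisE; case: eqP => [->|_]; last by rewrite !mulr0 mul0r.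
by rewrite d1 ji pair_coef_partner // mul0r mulr0.
Qed.

Definition pair_diags : p.-1.-tuple 'M[K]_N := [tuple pair_diag i.+1 | i < p.-1].

Definition pair_space : {vspace 'M[K]_N} := <<pair_diags>>%VS.

Lemma pair_space_Der : (pair_space <= Der c)%VS.
Proof.
by apply/span_subvP => _ /tnthP[i ->]; rewrite tnth_mktuple pair_diag_Der.
Qed.

Lemma pair_comb (y : 'I_p.-1 -> K) :
  \sum_i y i *: pair_diags`_i = diag_mx (\row_t \sum_i y i * pair_coef i.+1 t).
Proof.
rewrite (eq_bigr (fun i => diag_mx (y i *: \row_t pair_coef i.+1 t))) => [|i _].
  rewrite -linear_sum; congr diag_mx; apply/rowP => t.
  by rewrite !mxE summxE; apply: eq_bigr => i _; rewrite !mxE.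
by rewrite -tnth_nth tnth_mktuple linearZ.
Qed.

Definition block_first (i : nat) : 'I_N := insubd iX1 (2 * i.+1).

Lemma block_firstE (i : 'I_p.-1) : nat_of_ord (block_first i) = (2 * i.+1)%N.
Proof. by rewrite val_insubd ifT //; have := ltn_ord i; lia. Qed.

Lemma pair_coef_sum_lt2 (y : 'I_p.-1 -> K) t : (t < 2)%N ->
  \sum_i y i * pair_coef i.+1 t = 0.
Proof. by move=> t2; apply: big1 => i _; rewrite pair_coef_lt2 ?mulr0. Qed.

Lemma pair_coef_sum_ge2 (y : 'I_p.-1 -> K) t (i0 : 'I_p.-1) : (2 <= t)%N ->
  nat_of_ord i0 = (t./2).-1 -> \sum_i y i * pair_coef i.+1 t = pair_sign t * y i0.
Proof.
move=> t2 i0t; rewrite (bigD1 i0) //= big1 ?addr0 => [|i ne].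
  rewrite mulrC /pair_coef /pair_sign i0t; case ot: (odd t);
  case: eqP => e1; case: eqP => e2; try lia; rewrite /=; ring.
have ne' : nat_of_ord i != nat_of_ord i0 by apply: contra ne => /eqP e; apply/eqP/ord_inj.
rewrite /pair_coef; case: eqP => e1; case: eqP => e2; try lia.
by rewrite subrr mulr0.
Qed.

Lemma pair_coef_sum_first (y : 'I_p.-1 -> K) (i : 'I_p.-1) :
  \sum_j y j * pair_coef j.+1 (block_first i) = y i.
Proof.
rewrite (pair_coef_sum_ge2 _ (i0 := i)) block_firstE; [|lia|lia].
by rewrite /pair_sign ifF ?mul1r //; lia.
Qed.

Lemma free_pair_diags : free pair_diags.
Proof.
apply/freeP => y; rewrite pair_comb => /matrixP y0 i.
have := y0 (block_first i) (block_first i).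
by rewrite !mxE eqxx mulr1n pair_coef_sum_first.
Qed.

Lemma dim_pair_space : \dim pair_space = p.-1.
Proof. by have /eqP -> := free_pair_diags; rewrite size_tuple. Qed.

Lemma Inn_cap_pair_space : (Inn c :&: pair_space = 0)%VS.
Proof.
apply/eqP; rewrite -subv0; apply/subvP => M.
rewrite memv_cap memv0 => /andP[InnM /coord_span defM].
have coordM i : coord pair_diags i M = 0.
  have := Inn_diag (block_first i) InnM; rewrite [in LHS]defM pair_comb !mxE !eqxx !mulr1n.
  by rewrite pair_coef_sum_first pair_coef_sum_lt2 // mulr0 addr0.
by rewrite defM big1 // => i _; rewrite coordM scale0r.
Qed.

Lemma diag_mem_pair_space (d : 'rV[K]_N) :
  d 0 iX1 = 0 -> d 0 iX2 = 0 -> (forall a : 'I_N, (2 <= a)%N -> d 0 (pord a) = - d 0 a) ->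
  diag_mx d \in pair_space.
Proof.
move=> d1 d2 dpart.
suff -> : diag_mx d = \sum_(i < p.-1) d 0 (block_first i) *: pair_diags`_i.
  by apply: memv_suml => i _; rewrite memvZ // memv_span // mem_nth ?size_tuple.
rewrite pair_comb; congr diag_mx; apply/rowP => t; rewrite mxE.
have [t2|/ord_lt2[]->] := leqP 2 t; try by rewrite pair_coef_sum_lt2.
have ht : ((t./2).-1 < p.-1)%N by have := ltn_ord t; lia.
rewrite (pair_coef_sum_ge2 _ (i0 := Ordinal ht)) // /pair_sign.
case ot: (odd t).
  have -> : block_first (Ordinal ht) = pord t.
    by apply: ord_inj; rewrite block_firstE pordE /partner ot /=; lia.
  by rewrite dpart // mulN1r opprK.
have -> : block_first (Ordinal ht) = t by apply: ord_inj; rewrite block_firstE /=; lia.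
by rewrite mul1r.
Qed.

Lemma Der_sub_Inn_pair_space : (Der c <= Inn c + pair_space)%VS.
Proof.
apply/subvP => D DerD; rewrite [D](der_decomp DerD) memv_add ?ad_Inn //.
apply: diag_mem_pair_space; rewrite ?mxE.
- by rewrite weight_X1; ring.
- by rewrite (der_X2X2 DerD) weight_X2; ring.
move=> a a2; rewrite !mxE.
have D11 : D iX1 iX1 = D a a + D (pord a) (pord a).
  case oa: (odd a); last by rewrite (der_pair_diag DerD a2) ?oa.
  have b2 : (2 <= pord a)%N by rewrite pordE /partner oa; lia.
  have eb : ~~ odd (pord a) by rewrite pordE partner_odd oa.
  by rewrite (der_pair_diag DerD b2 eb) pordK addrC.
by rewrite D11 pordE weight_partner; ring.
Qed.

Theorem H1_dim_Fc : H1_dim c = p.-1.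
Proof.
rewrite /H1_dim (dimv_compl_cap pair_space_Der Inn_cap_pair_space Der_sub_Inn_pair_space).
exact: dim_pair_space.
Qed.

End Derivations.

Theorem corollary1 (R : realType) (p : nat) (phi : nat -> R[i]) :
  (2 <= p)%N -> ~ in_Omega1 p phi ->
  H1_dim (Fc p phi) = p.-1.
Proof.
move=> p2 notO; have p_gt0 : (0 < p)%N by lia.
apply: (H1_dim_Fc p_gt0); apply: weight_inj.
- exact: notOmega1_block_weight_inj.
- exact: notOmega1_block_weight_sum.
Qed.
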